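(* Let $G\in\mathcal{G}(\widehat{C}_6,\widehat{C}_7)$, let $x\in V(G)$, let $A$ be a connected component of $G[N_2(x)]$ not belonging to $A^*$, and let $a,b$ be adjacent vertices of $A$ with $|N(a)\cap D|=|N(b)\cap D|=2$. Then there is no independent set $S\subseteq N_2(x)\setminus V(A^* )$ with $D\subseteq N(S)$.
   Context: All graphs are finite, simple and undirected. $\mathcal{G}(\widehat{C}_6,\widehat{C}_7)$ is the family of graphs with no subgraph (not necessarily induced) isomorphic to $C_6$ or $C_7$. For a vertex set $S$, $N_i(S)$ is the set of vertices at distance exactly $i$ from $S$, $N(S)=N_1(S)$, $N(v)=N(\{v\})$, $N_2(v)=N_2(\{v\})$ (all in $G$). $A^*$ is the set of connected components $A$ of $G[N_2(x)]$ for which there exists a vertex $a\in V(A)$ with $N(x)\cap N(a)=N(x)\cap N(V(A))$; $V(A^* )$ is the union of their vertex sets; and $D=N(x)\setminus N(V(A^* ))$. *)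

From mathcomp Require Import all_boot.
Set Implicit Arguments. Unset Strict Implicit. Unset Printing Implicit Defensive.

Section Graph.
Variables (T : finType) (e : rel T).

Definition simple_graph : Prop := symmetric e /\ irreflexive e.

(* G contains a (not necessarily induced) subgraph isomorphic to C_k:
   k distinct vertices v_0,...,v_{k-1} with v_i ~ v_{i+1 mod k}. *)
Definition has_Ck (k : nat) : Prop :=
  exists s : seq T, [/\ size s = k, uniq s & cycle e s].

Definition nbr (v : T) : {set T} := [set u | e v u].

Definition nbrS (S : {set T}) : {set T} :=
  [set u | (u \notin S) && [exists s in S, e s u]].

Definition N2 (x : T) : {set T} :=
  [set u | [&& u != x, ~~ e x u & [exists w, e x w && e w u]]].

Definition induced_rel (W : {set T}) : rel T :=
  fun u v => [&& e u v, u \in W & v \in W].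

Definition is_component (W A : {set T}) : bool :=
  [exists a in W, A == [set y | connect (induced_rel W) a y]].

Definition in_Astar (x : T) (A : {set T}) : bool :=
  is_component (N2 x) A &&
  [exists a in A, nbr x :&: nbr a == nbr x :&: nbrS A].

Definition VAstar (x : T) : {set T} :=
  [set y | [exists A : {set T}, in_Astar x A && (y \in A)]].

Definition Dset (x : T) : {set T} := nbr x :\: nbrS (VAstar x).

Definition independent (S : {set T}) : Prop :=
  {in S &, forall u v, ~~ e u v}.

End Graph.

From mathcomp Require Import all_boot.
Set Implicit Arguments. Unset Strict Implicit. Unset Printing Implicit Defensive.

(* Let a see the vertices p, q of D and b see r, s.  If {p, q} = {r, s}, no
   vertex of A has a neighbour in N(x) outside {p, q}, since such a neighbour
   closes a C6 or C7 through x; so a witnesses A \in A^*.  If the pairs share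
   exactly one vertex, it closes a C6 with x, a, b and the two private
   vertices.  If they are disjoint, we may assume b \notin S and pick t, t' in S
   adjacent to r and s.  In the component of t in G[N2(x)], every vertex sees
   exactly one of r, s and no other vertex of N(x), for otherwise a C6 or C7
   appears; as t \notin V(A^* ), the component is not monochromatic, hence
   contains an edge from a neighbour of r to a neighbour of s.  Two such edges
   in different components close a C6 through r and s.  If t and t' lie in the
   same component, a shortest t-t' path has length at least 2 (S is
   independent), and along it a neighbour of r and a neighbour of s occur at
   distance 2 or 3, closing a C6 or C7 through x. *)

Lemma connect_ind (T : finType) (R : rel T) (P : T -> Prop) u v :
  (forall y z, P y -> R y z -> P z) -> P u -> connect R u v -> P v.
Proof.
move=> step Pu /connectP[p Rp ->].
by elim: p u Pu Rp => [|y p IHp] u Pu //= /andP[/(step _ _ Pu) Py /(IHp _ Py)].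
Qed.

Lemma connect_exit_edge (T : finType) (R : rel T) (P : pred T) u v :
  connect R u v -> P u -> ~~ P v ->
  exists y z, [/\ connect R u y, P y, R y z & ~~ P z].
Proof.
move=> /connectP[p Rp ->]; elim: p u Rp => [|y p IHp] u /=; first by move=> _ ->.
move=> /andP[Ruy Rp] Pu Plast; case Py: (P y).
- have [y' [z [uy' Py' Ry'z Pz]]] := IHp y Rp Py Plast.
  by exists y', z; split=> //; apply: connect_trans (connect1 Ruy) uy'.
- by exists u, y; rewrite Py connect0.
Qed.

Section Graph.

Variables (T : finType) (e : rel T).
Hypotheses (e_sym : symmetric e) (e_irr : irreflexive e).

Lemma adj_neq u v : e u v -> u != v.
Proof. by apply: contraTneq => ->; rewrite e_irr. Qed.

Lemma induced_connect_sym (W : {set T}) : connect_sym (induced_rel e W).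
Proof.
apply: sym_connect_sym => u v.
by rewrite /induced_rel e_sym [(u \in W) && _]andbC.
Qed.

Lemma connect_induced_mem (W : {set T}) u v :
  u \in W -> connect (induced_rel e W) u v -> v \in W.
Proof. by apply: (connect_ind (P := fun y => y \in W)) => y z _ /and3P[]. Qed.

Lemma component_sub (W A : {set T}) : is_component e W A -> A \subset W.
Proof.
move=> /existsP[a0 /andP[a0W /eqP->]]; apply/subsetP => y; rewrite inE.
exact: connect_induced_mem.
Qed.

Lemma componentE (W A : {set T}) a : is_component e W A -> a \in A ->
  A = [set y | connect (induced_rel e W) a y].
Proof.
move=> /existsP[a0 /andP[_ /eqP->]]; rewrite inE => a0a.
by apply/setP => y; rewrite !inE (same_connect (induced_connect_sym W) a0a).
Qed.

Lemma component_of (W : {set T}) a :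
  a \in W -> is_component e W [set y | connect (induced_rel e W) a y].
Proof. by move=> aW; apply/existsP; exists a; rewrite aW eqxx. Qed.

Lemma card2_nbrI (D : {set T}) a : #|nbr e a :&: D| = 2 ->
  exists p q, [/\ p != q, e a p, e a q, p \in D & q \in D].
Proof.
move/eqP/cards2P => [p [q [pq ED]]]; exists p, q.
have : [set p; q] \subset nbr e a :&: D by rewrite ED.
by rewrite subUset !sub1set !inE => /andP[/andP[-> ->] /andP[-> ->]].
Qed.

Variable x : T.
Local Notation N2x := (N2 e x).
Local Notation R := (induced_rel e N2x).

Lemma N2_nadj v : v \in N2x -> ~~ e x v.
Proof. by rewrite inE => /and3P[]. Qed.

Lemma N2_nbr v : v \in N2x -> exists2 w, e x w & e v w.
Proof.
by rewrite inE => /and3P[_ _ /existsP[w /andP[xw wv]]]; exists w; rewrite // e_sym.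
Qed.

Lemma center_N2_neq v : v \in N2x -> x != v.
Proof. by rewrite inE eq_sym => /and3P[]. Qed.

Lemma nbr_N2_neq u v : e x u -> v \in N2x -> u != v.
Proof. by move=> xu /N2_nadj; apply: contraNneq => <-. Qed.

Lemma mem_VAstar A y : in_Astar e x A -> y \in A -> y \in VAstar e x.
Proof. by move=> AA yA; rewrite inE; apply/existsP; exists A; rewrite AA yA. Qed.

Lemma in_AstarI A a : is_component e N2x A -> a \in A ->
  (forall y w, y \in A -> e x w -> e y w -> e a w) -> in_Astar e x A.
Proof.
move=> HA aA dom; rewrite /in_Astar HA; apply/existsP; exists a; rewrite aA /=.
apply/eqP/setP => w; rewrite !inE; case xw: (e x w) => //=.
apply/idP/andP => [aw|[_ /existsP[y /andP[yA yw]]]]; last exact: dom yw.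
split; last by apply/existsP; exists a; rewrite aA.
by apply: contraL xw => /(subsetP (component_sub HA)) /N2_nadj.
Qed.

Ltac edge := first [done | assumption | rewrite e_sym; assumption].
Ltac distinct := first
  [ done | assumption | rewrite eq_sym; assumption
  | apply: adj_neq; edge
  | apply: nbr_N2_neq; eassumption
  | rewrite eq_sym; apply: nbr_N2_neq; eassumption
  | apply: center_N2_neq; eassumption
  | rewrite eq_sym; apply: center_N2_neq; eassumption ].
Ltac exhibit_cycle s := exists s; split;
  [ reflexivity
  | rewrite /= !inE !negb_or; repeat (apply/andP; split); distinct
  | rewrite /=; repeat (apply/andP; split); edge ].

Hypotheses (no_C6 : ~ has_Ck e 6) (no_C7 : ~ has_Ck e 7).

Lemma shared_nbr_cycle a b c u v :
  a \in N2x -> b \in N2x -> e a b -> e a u -> e a c -> e b c -> e b v ->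
  e x u -> e x c -> e x v -> u != c -> u != v -> c != v -> False.
Proof. by move=> *; apply: no_C6; exhibit_cycle [:: x; u; a; c; b; v]. Qed.

Lemma no_2path_between_nbrs c c' y0 y1 y2 :
  e x c -> e x c' -> c != c' -> y0 \in N2x -> y1 \in N2x -> y2 \in N2x ->
  y0 != y2 -> e y0 c -> e y0 y1 -> e y1 y2 -> e y2 c' -> False.
Proof. by move=> *; apply: no_C6; exhibit_cycle [:: x; c; y0; y1; y2; c']. Qed.

Lemma no_3path_between_nbrs c c' y0 y1 y2 y3 :
  e x c -> e x c' -> c != c' ->
  y0 \in N2x -> y1 \in N2x -> y2 \in N2x -> y3 \in N2x ->
  y0 != y2 -> y0 != y3 -> y1 != y3 ->
  e y0 c -> e y0 y1 -> e y1 y2 -> e y2 y3 -> e y3 c' -> False.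
Proof. by move=> *; apply: no_C7; exhibit_cycle [:: x; c; y0; y1; y2; y3; c']. Qed.

Lemma common_pair_confined a b p q y z w :
  a \in N2x -> b \in N2x -> e a b -> e a p -> e a q -> e b p -> e b q ->
  e x p -> e x q -> p != q ->
  y \in N2x -> z \in N2x -> e y z -> e y p -> e x w -> e z w -> w != p -> w != q ->
  False.
Proof.
move=> Ha Hb ab ap aq bp bq xp xq pq Hy Hz yz yp xw zw wp wq.
case: (eqVneq a y) => [ay|ay]; last case: (eqVneq a z) => [az|az].
- subst y; case: (eqVneq z b) => [zb|zb].
    by subst z; apply: no_C6; exhibit_cycle [:: x; w; b; q; a; p].
  by apply: no_C7; exhibit_cycle [:: x; w; z; a; p; b; q].
- subst z; case: (eqVneq y b) => [yb|yb].
    by subst y; apply: no_C6; exhibit_cycle [:: x; w; a; q; b; p].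
  by apply: no_C7; exhibit_cycle [:: x; w; a; y; p; b; q].
- by apply: no_C7; exhibit_cycle [:: x; w; z; y; p; a; q].
Qed.

Lemma common_pair_in_Astar A a b p q :
  is_component e N2x A -> a \in A -> b \in N2x -> e a b ->
  e a p -> e a q -> e b p -> e b q -> e x p -> e x q -> p != q -> in_Astar e x A.
Proof.
move=> HA aA Hb ab ap aq bp bq xp xq pq.
have Ha := subsetP (component_sub HA) a aA.
pose confined y := forall w, e x w -> e y w -> w = p \/ w = q.
have confined_step y z : y \in N2x -> z \in N2x -> e y z -> e y p \/ e y q ->
    confined z.
  move=> Hy Hz yz ypq w xw zw.
  case: (eqVneq w p) => [->|wp]; first by left.
  case: (eqVneq w q) => [->|wq]; first by right.
  case: ypq => [yp|yq]; exfalso.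
  - exact: (common_pair_confined Ha Hb ab ap aq bp bq xp xq pq Hy Hz yz yp xw zw wp wq).
  - have qp : q != p by rewrite eq_sym.
    exact: (common_pair_confined Ha Hb ab aq ap bq bp xq xp qp Hy Hz yz yq xw zw wq wp).
have confinedA y : y \in A -> confined y.
  rewrite (componentE HA aA) inE => ay.
  have base : a \in N2x /\ confined a.
    by split=> //; apply: (confined_step b) => //; [rewrite e_sym | left].
  apply: (proj2 (connect_ind (P := fun y => y \in N2x /\ confined y) _ base ay)).
  move=> u v [Hu cu] /and3P[uv _ Hv]; split=> //; apply: (confined_step u) => //.
  have [w xw uw] := N2_nbr Hu.
  by case: (cu w xw uw) => <-; [left | right].
apply: in_AstarI HA aA _ => y w yA xw yw.
by case: (confinedA y yA w xw yw) => ->.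
Qed.

Lemma nbr_pairs_disjoint A a b p q r s :
  is_component e N2x A -> ~ in_Astar e x A -> a \in A -> b \in N2x -> e a b ->
  e a p -> e a q -> e b r -> e b s -> e x p -> e x q -> e x r -> e x s ->
  p != q -> r != s -> ~~ e a r /\ ~~ e a s.
Proof.
move=> HA notA aA Hb ab ap aq br bs xp xq xr xs pq rs.
have Ha := subsetP (component_sub HA) a aA.
have other_of_a c : exists u, [/\ e a u, e x u & u != c].
  by case: (eqVneq p c) => [<-|pc]; [exists q; rewrite eq_sym | exists p].
case: (boolP (e a r)) => ar; case: (boolP (e a s)) => as_ //.
- by case: notA; apply: (common_pair_in_Astar HA aA Hb ab ar as_ br bs xr xs rs).
- have [u [au xu ur]] := other_of_a r.
  have us : u != s by apply: contraNneq as_ => <-.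
  by case: (shared_nbr_cycle Ha Hb ab au ar br bs xu xr xs ur us rs).
- have [u [au xu us]] := other_of_a s.
  have ur : u != r by apply: contraNneq ar => <-.
  have sr : s != r by rewrite eq_sym.
  by case: (shared_nbr_cycle Ha Hb ab au as_ bs br xu xs xr us ur sr).
Qed.

Lemma private_nbr_sharer a b p q c c' t :
  a \in N2x -> b \in N2x -> e a b -> e a p -> e a q -> e b c -> e b c' ->
  e x p -> e x q -> e x c -> e x c' -> p != q -> p != c -> q != c -> c != c' ->
  t \in N2x -> t != a -> t != b -> e t c ->
  [/\ ~~ e t a, ~~ e t b & forall w, e x w -> e t w -> w = c].
Proof.
move=> Ha Hb ab ap aq bc bc' xp xq xc xc' pq pc qc cc' Ht ta tb tc; split.
- by apply/negP => eta; apply: no_C6; exhibit_cycle [:: x; c; t; a; b; c'].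
- by apply/negP => etb; apply: no_C6; exhibit_cycle [:: x; c; t; b; a; p].
move=> w xw tw; apply/eqP/negPn/negP => wc.
case: (eqVneq w p) => [wp|wp].
- by subst w; apply: no_C6; exhibit_cycle [:: x; q; a; p; t; c].
- by apply: no_C7; exhibit_cycle [:: x; w; t; c; b; a; p].
Qed.

Section TwoPairs.

Variables a b p q r s : T.
Hypotheses (Ha : a \in N2x) (Hb : b \in N2x) (ab : e a b).
Hypotheses (ap : e a p) (aq : e a q) (br : e b r) (bs : e b s).
Hypotheses (xp : e x p) (xq : e x q) (xr : e x r) (xs : e x s).
Hypotheses (pq : p != q) (pr : p != r) (ps : p != s) (qr : q != r) (qs : q != s).
Hypotheses (rs : r != s).

Definition rs_vertex y := [&& y \in N2x, y != a, y != b & e y r || e y s].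

Lemma rs_vertex_isolated y : rs_vertex y ->
  [/\ ~~ e y a, ~~ e y b & forall w, e x w -> e y w = (w == if e y r then r else s)].
Proof.
case/and4P => Hy ya yb; case: ifP => [yr _|yr /= ys].
- have [yNa yNb only_r] :=
    private_nbr_sharer Ha Hb ab ap aq br bs xp xq xr xs pq pr qr rs Hy ya yb yr.
  by split=> // w xw; apply/idP/eqP => [/(only_r w xw)|->].
- have sr : s != r by rewrite eq_sym.
  have [yNa yNb only_s] :=
    private_nbr_sharer Ha Hb ab ap aq bs br xp xq xs xr pq ps qs sr Hy ya yb ys.
  by split=> // w xw; apply/idP/eqP => [/(only_s w xw)|->].
Qed.

Lemma rs_vertex_excl y : rs_vertex y -> e y r -> ~~ e y s.
Proof.
by move=> ry yr; have [_ _ ->] := rs_vertex_isolated ry; rewrite // yr eq_sym.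
Qed.

Lemma rs_vertex_step y z : rs_vertex y -> R y z -> rs_vertex z.
Proof.
move=> ry /and3P[yz Hy Hz]; have [yNa yNb _] := rs_vertex_isolated ry.
have za : z != a by apply: contraNneq yNa => <-.
have zb : z != b by apply: contraNneq yNb => <-.
rewrite /rs_vertex Hz za zb /=; have [w xw zw] := N2_nbr Hz.
case: (eqVneq w r) => [<-|wr]; first by rewrite zw.
case: (eqVneq w s) => [<-|ws]; first by rewrite zw orbT.
case/and4P: ry => _ _ y_b /orP[yr|ys]; exfalso; apply: no_C7.
- by exhibit_cycle [:: x; w; z; y; r; b; s].
- by exhibit_cycle [:: x; w; z; y; s; b; r].
Qed.

Lemma rs_vertex_connect y z : rs_vertex y -> connect R y z -> rs_vertex z.
Proof. exact: (connect_ind (P := fun y => rs_vertex y) rs_vertex_step). Qed.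

Lemma rs_edge_in_component t : t \notin VAstar e x -> rs_vertex t ->
  exists y z, [/\ connect R t y, R y z, e y r & e z s].
Proof.
move=> tA rt; have Ht : t \in N2x by case/and4P: rt.
have rs_C y : connect R t y -> rs_vertex y by apply: rs_vertex_connect.
case: (boolP [exists u, connect R t u && (e u r != e t r)]) => [|mono].
  case/existsP => u /andP[tu ut].
  have [v [w [tv tw vr wr]]] :
      exists v w, [/\ connect R t v, connect R t w, e v r & ~~ e w r].
    case tr: (e t r) in ut; [exists t, u | exists u, t];
      by move: ut; rewrite connect0 tu tr; case: (e u r).
  have vw : connect R v w by rewrite (same_connect (induced_connect_sym _) tv) in tw.
  have [y [z [vy yr yz zr]]] := connect_exit_edge (P := e^~ r) vw vr wr.
  have ty := connect_trans tv vy.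
  have /and4P[_ _ _] := rs_C z (connect_trans ty (connect1 yz)).
  by rewrite (negbTE zr) => zs; exists y, z.
exfalso; move/negP: tA; apply.
have tC : t \in [set y | connect R t y] by rewrite inE connect0.
apply: (mem_VAstar _ tC); apply: (in_AstarI (component_of Ht) tC).
rewrite /= => y w; rewrite inE => ty xw.
have same_colour : e y r = e t r.
  by apply/eqP; move: mono; rewrite negb_exists => /forallP/(_ y); rewrite ty negbK.
have [_ _ Ey] := rs_vertex_isolated (rs_C y ty).
have [_ _ Et] := rs_vertex_isolated rt.
by rewrite Ey // Et // same_colour.
Qed.

Lemma no_rs_path y0 y1 y2 ys : rs_vertex y0 -> e y0 r ->
  path R y0 [:: y1, y2 & ys] -> uniq [:: y0, y1, y2 & ys] -> ~~ e (last y2 ys) s.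
Proof.
elim: ys y0 y1 y2 => [|y3 ys IH] y0 y1 y2 ry0 y0r /=.
all: move=> /andP[R01 /andP[R12 Rp]] /andP[y0_nin /andP[y1_nin U]].
all: have ry2 := rs_vertex_step (rs_vertex_step ry0 R01) R12.
all: move: (R01) (R12) => /and3P[e01 H0 H1] /and3P[e12 _ H2].
all: have y02 : y0 != y2 by apply: contraNneq y0_nin => ->; rewrite !inE eqxx orbT.
all: case y2s: (e y2 s);
  first by case: (no_2path_between_nbrs xr xs rs H0 H1 H2 y02 y0r e01 e12 y2s).
  by [].
have y2r : e y2 r by case/and4P: ry2 => _ _ _; rewrite y2s orbF.
have R23 : R y2 y3 by case/andP: Rp.
have ry3 := rs_vertex_step ry2 R23; have /and3P[e23 _ H3] := R23.
have ry1 := rs_vertex_step ry0 R01.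
case y1r: (e y1 r).
  by apply: (IH y1 y2 y3) => //=; rewrite ?R12 ?Rp ?y1_nin.
have y1s : e y1 s by case/and4P: ry1 => _ _ _; rewrite y1r.
have y03 : y0 != y3 by apply: contraNneq y0_nin => ->; rewrite !inE eqxx !orbT.
have y13 : y1 != y3 by apply: contraNneq y1_nin => ->; rewrite !inE eqxx !orbT.
case y3s: (e y3 s).
  by case: (no_3path_between_nbrs xr xs rs H0 H1 H2 H3 y02 y03 y13 y0r e01 e12 e23 y3s).
have y3r : e y3 r by case/and4P: ry3 => _ _ _; rewrite y3s orbF.
have sr : s != r by rewrite eq_sym.
by case: (no_2path_between_nbrs xs xr sr H1 H2 H3 y13 y1s e12 e23 y3r).
Qed.

Lemma two_pairs_undominated (S : {set T}) :
  S \subset N2x :\: VAstar e x -> independent e S -> b \notin S ->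
  r \in nbrS e S -> s \in nbrS e S -> False.
Proof.
move=> SN2 Sind bS; rewrite !inE => /andP[_ /exists_inP[t tS tr]].
move=> /andP[_ /exists_inP[t' t'S t's]].
case/setDP: (subsetP SN2 t tS) => Ht tA; case/setDP: (subsetP SN2 t' t'S) => Ht' t'A.
have ar : ~~ e a r.
  by apply/negP => ar; apply: no_C6; exhibit_cycle [:: x; q; a; r; b; s].
have as_ : ~~ e a s.
  by apply/negP => as_; apply: no_C6; exhibit_cycle [:: x; q; a; s; b; r].
have rt : rs_vertex t.
  apply/and4P; split; rewrite ?tr //; first by apply: contraNneq ar => <-.
  by apply: contraNneq bS => <-.
have rt' : rs_vertex t'.
  apply/and4P; split; rewrite ?t's ?orbT //; first by apply: contraNneq as_ => <-.
  by apply: contraNneq bS => <-.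
case: (boolP (connect R t t')) => [|tNt'].
  case/connectP => pth Rp t'E; case: (shortenP Rp) t'E => p' Rp' U _ t'E.
  case: p' Rp' U t'E => [|y1 [|y2 ys]] /= Rp' U t'E; subst t'.
  - by rewrite (negbTE (rs_vertex_excl rt tr)) in t's.
  - by case/andP: Rp' => /and3P[tt' _ _]; rewrite (negbTE (Sind _ _ tS t'S)) in tt'.
  - by rewrite (negbTE (no_rs_path rt tr Rp' U)) in t's.
have [y0 [z0 [ty0 Ry0z0 y0r z0s]]] := rs_edge_in_component tA rt.
have [y1 [z1 [t'y1 Ry1z1 y1r z1s]]] := rs_edge_in_component t'A rt'.
have apart u v : connect R t u -> connect R t' v -> u != v.
  move=> tu t'v; apply: contraNneq tNt' => uv; apply: connect_trans tu _.
  by rewrite uv induced_connect_sym.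
have tz0 := connect_trans ty0 (connect1 Ry0z0).
have t'z1 := connect_trans t'y1 (connect1 Ry1z1).
have [y0z1 y0y1] := (apart _ _ ty0 t'z1, apart _ _ ty0 t'y1).
have [z0z1 z0y1] := (apart _ _ tz0 t'z1, apart _ _ tz0 t'y1).
case/and3P: Ry0z0 Ry1z1 => e0 H0 H0' /and3P[e1 H1 H1'].
by apply: no_C6; exhibit_cycle [:: r; y0; z0; s; z1; y1].
Qed.

End TwoPairs.

End Graph.

Theorem corollary2p13 (T : finType) (e : rel T) :
  simple_graph e -> ~ has_Ck e 6 -> ~ has_Ck e 7 ->
  forall (x : T) (A : {set T}),
    is_component e (N2 e x) A -> ~ in_Astar e x A ->
  forall a b : T, a \in A -> b \in A -> e a b ->
    #|nbr e a :&: Dset e x| = 2 -> #|nbr e b :&: Dset e x| = 2 ->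
  ~ (exists S : {set T},
       [/\ S \subset N2 e x :\: VAstar e x, independent e S &
           Dset e x \subset nbrS e S]).
Proof.
move=> [e_sym e_irr] no_C6 no_C7 x A HA notA a b aA bA ab Da Db [S [SN2 Sind DS]].
have [Ha Hb] := (subsetP (component_sub HA) a aA, subsetP (component_sub HA) b bA).
have D_nbr w : w \in Dset e x -> e x w by rewrite inE => /andP[_]; rewrite inE.
have [p [q [pq ap aq pD qD]]] := card2_nbrI Da.
have [r [s [rs br bs rD sD]]] := card2_nbrI Db.
have [xp xq] := (D_nbr p pD, D_nbr q qD).
have [xr xs] := (D_nbr r rD, D_nbr s sD).
have [ar as_] := nbr_pairs_disjoint e_sym e_irr no_C6 no_C7 HA notA aA Hb ab
  ap aq br bs xp xq xr xs pq rs.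
have [pr qr] : p != r /\ q != r by split; apply: contraNneq ar => <-.
have [ps qs] : p != s /\ q != s by split; apply: contraNneq as_ => <-.
case: (boolP (a \in S)) => aS.
- have bS : b \notin S by apply/negP => /(Sind a b aS); rewrite ab.
  exact: (two_pairs_undominated e_sym e_irr no_C6 no_C7 Ha Hb ab ap aq br bs xp xq xr xs
    pq pr ps qr qs rs SN2 Sind bS (subsetP DS r rD) (subsetP DS s sD)).
- have [ba rp sp rq sq] : [/\ e b a, r != p, s != p, r != q & s != q].
    by rewrite e_sym !(eq_sym _ p) !(eq_sym _ q).
  exact: (two_pairs_undominated e_sym e_irr no_C6 no_C7 Hb Ha ba br bs ap aq xr xs xp xq
    rs rp rq sp sq pq SN2 Sind aS (subsetP DS p pD) (subsetP DS q qD)).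
Qed.
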